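(* Let $(X_n,\|\cdot\|_n)_{n\ge1}$ be a sequence of Banach spaces and let $(X,\|\cdot\|)$ be the space defined in the context. (i) Let $m\ge1$ and $x_n\in X_n$ for $n=1,\dots,m$ with $\sum_{n=1}^m\|x_n\|_n>0$. Then there exist $d_1,\dots,d_m\in(0,1]$ such that $\|(x_1,\dots,x_m)\|=\sum_{n=1}^m d_n\|x_n\|_n$. (ii) Let $x=(x_1,x_2,\dots)\in X$ and suppose there exist $c>0$ and $k\in\mathbb{N}$ such that $\frac{\|x_n\|_n}{n}<c\le\|(x_1,\dots,x_k)\|$ for every $n>k$. Then $$\|x\|=\|(x_1,\dots,x_k)\|+\sum_{n=k+1}^\infty\Big(1-\frac1{n+1}\Big)\|x_n\|_n.$$ (iii) Let $x=(x_1,x_2,\dots)$ be a nonzero vector of $X$. Then there exists $k\in\mathbb{N}$ such that $$\|x\|=\|(x_1,\dots,x_k)\|+\sum_{n=k+1}^\infty\Big(1-\frac1{n+1}\Big)\|x_n\|_n.$$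
   Context: $c_{00}((X_n))$ is the vector space of sequences $(x_1,x_2,\dots)$ with $x_k\in X_k$ and only finitely many $x_k\ne0$; $(x_1,\dots,x_n)$ denotes $(x_1,\dots,x_n,0,0,\dots)$. On $c_{00}((X_n))$ define inductively $\|(x_1)\|=\|x_1\|_1$ (the norm of $X_1$) and, for $n\ge2$, $$\|(x_1,\dots,x_n)\|=\Big(1-\tfrac{1}{n+1}\Big)\big(\|x_n\|_n+\|(x_1,\dots,x_{n-1})\|\big)+\tfrac{1}{n+1}\max\Big\{\tfrac{\|x_n\|_n}{n},\ \|(x_1,\dots,x_{n-1})\|\Big\}.$$ $X$ is the completion of $(c_{00}((X_n)),\|\cdot\|)$; since $\frac12\sum\|x_n\|_n\le\|(x_n)\|\le\sum\|x_n\|_n$ on $c_{00}((X_n))$, $X$ is identified with the space of sequences $x=(x_n)$, $x_n\in X_n$, with $\sum_n\|x_n\|_n<\infty$, and $\|x\|=\lim_k\|(x_1,\dots,x_k)\|$. *)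

From HB Require Import structures.
From mathcomp Require Import all_boot all_order all_algebra.
From mathcomp Require Import all_classical all_reals all_analysis.
Set Implicit Arguments. Unset Strict Implicit. Unset Printing Implicit Defensive.
Import Order.TTheory GRing.Theory Num.Theory.
Import numFieldNormedType.Exports.
Local Open Scope ring_scope.
Local Open Scope classical_set_scope.

(* Sequences x = (x_1, x_2, ...) with x_n in X n (index 0 is unused:
   the paper's spaces are indexed by n >= 1).  The norm of the finitely
   supported vector (x_1, ..., x_n) is [tnorm x n]; it only depends on
   x_1, ..., x_n. *)
Fixpoint tnorm (R : realType) (X : nat -> normedModType R)
    (x : forall n, X n) (n : nat) : R :=
  match n with
  | 0%N => 0
  | S n' =>
    match n' with
    | 0%N => `|x 1%N|
    | S _ =>
      let a := `|x n| in
      let t := tnorm x n' in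
      (1 - (n.+1%:R)^-1) * (a + t) + (n.+1%:R)^-1 * Num.max (a / n%:R) t
    end
  end.

Definition inX (R : realType) (X : nat -> normedModType R)
    (x : forall n, X n) : Prop :=
  cvg ((fun N => \sum_(1 <= k < N) `|x k|) @ \oo).

Definition Xnorm (R : realType) (X : nat -> normedModType R)
    (x : forall n, X n) : R :=
  limn (tnorm x).

From HB Require Import structures.
From mathcomp Require Import all_boot all_order all_algebra.
From mathcomp Require Import all_classical all_reals all_analysis.
From mathcomp Require Import ring lra zify.
Import Order.TTheory GRing.Theory Num.Theory.
Import numFieldNormedType.Exports.
Local Open Scope ring_scope.
Local Open Scope classical_set_scope.

(* Write [t_n] for the norm of (x_1, ..., x_n) and [a_n = ||x_n||].  Each step
   [t_n = (1 - w) (a_n + t_(n-1)) + w max (a_n / n, t_(n-1))], [w = 1/(n+1)],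
   rescales [t_(n-1)] and adds [a_n] with coefficients in (0, 1] whichever
   term realizes the max; this gives (i), and [t_n <= sum a_n], so [t_n]
   increases to [||x||].  Once [a_n / n] stays below [t_n] the max is always
   [t_(n-1)] and the recursion telescopes, which gives (ii).  For (iii) take
   for [c] the norm at a nonzero coordinate: since [a_n -> 0], eventually
   [a_n / n < c]. *)

Section TruncatedNorm.
Context {R : realType} {X : nat -> normedModType R} (x : forall n, X n).

Let w n : R := (n.+1%:R)^-1.

Let w_gt0 n : 0 < w n.
Proof. by rewrite invr_gt0 ltr0n. Qed.

Let w_lt1 {n} : (1 <= n)%N -> w n < 1.
Proof. by move=> n1; rewrite invf_lt1 ?ltr0n // ltr1n ltnS. Qed.

Lemma tnormE n : (1 <= n)%N ->
  tnorm x n = (1 - w n) * (`|x n| + tnorm x n.-1)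
              + w n * Num.max (`|x n| / n%:R) (tnorm x n.-1).
Proof. by case: n => [//|[|//]] _; rewrite /= max_l ?divr1 ?addr0 //; field. Qed.

Lemma tnorm_ge0 n : 0 <= tnorm x n.
Proof.
elim: n => [//|n IH]; rewrite tnormE //=.
have w1 := w_lt1 (ltn0Sn n); have w0 := w_gt0 n.+1.
have : 0 <= Num.max (`|x n.+1| / n.+1%:R) (tnorm x n) by rewrite le_max IH orbT.
have : 0 <= `|x n.+1| by [].
nra.
Qed.

Lemma tnorm_nondecreasing : nondecreasing_seq (tnorm x).
Proof.
apply/nondecreasing_seqP => n; rewrite [leRHS]tnormE //=.
have w1 := w_lt1 (ltn0Sn n); have w0 := w_gt0 n.+1.
have : tnorm x n <= Num.max (`|x n.+1| / n.+1%:R) (tnorm x n) by rewrite le_max lexx orbT.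
have : 0 <= `|x n.+1| by [].
nra.
Qed.

Lemma tnorm_weighted_sum m : exists d : nat -> R,
  (forall n, (1 <= n <= m)%N -> 0 < d n <= 1) /\
  tnorm x m = \sum_(1 <= n < m.+1) d n * `|x n|.
Proof.
elim: m => [|m [d [d01 tm]]].
  by exists (fun=> 1); split=> [n /andP[/leq_trans/[apply]]|]; rewrite ?big_geq.
have w1 := w_lt1 (ltn0Sn m); have w0 := w_gt0 m.+1.
have m1 : 1 <= (m.+1%:R : R) by rewrite ler1n.
have d01_old n : (1 <= n <= m.+1)%N -> n != m.+1 -> 0 < d n <= 1.
  by move=> /andP[n1 nm] nm'; apply: d01; rewrite n1 -ltnS ltn_neqAle nm' nm.
rewrite tnormE //= tm.
set t := \sum_(1 <= n < m.+1) d n * `|x n|.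
have [hmax|hmax] := leP (`|x m.+1| / m.+1%:R) t.
- exists (fun n => if n == m.+1 then 1 - w m.+1 else d n); split.
    move=> n /d01_old; case: eqP => [_ _|_ /(_ isT)//]; apply/andP; lra.
  rewrite big_nat_recr //= eqxx (eq_big_nat _ _ (F2 := fun n => d n * `|x n|)).
    by rewrite -/t; ring.
  by move=> i /andP[_ im]; rewrite ltn_eqF.
- exists (fun n => if n == m.+1 then 1 - w m.+1 + w m.+1 / m.+1%:R
                  else (1 - w m.+1) * d n); split.
    move=> n /d01_old; case: eqP => [_ _|_ /(_ isT)/andP[dn0 dn1]].
      have : w m.+1 / m.+1%:R <= w m.+1 by rewrite ler_pdivrMr ?ltr0n // ler_peMr // ltW.
      have : 0 <= w m.+1 / m.+1%:R by rewrite divr_ge0 ?ltW.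
      move: (w m.+1 / m.+1%:R) => q q0 qw; apply/andP; lra.
    by apply/andP; split; [rewrite mulr_gt0 ?subr_gt0 | nra].
  rewrite big_nat_recr //= eqxx.
  rewrite (eq_big_nat _ _ (F2 := fun n => (1 - w m.+1) * (d n * `|x n|))).
    by rewrite -mulr_sumr -/t; ring.
  by move=> i /andP[_ im]; rewrite ltn_eqF // mulrA.
Qed.

Lemma tnorm_le_sum_norm m : tnorm x m <= \sum_(1 <= n < m.+1) `|x n|.
Proof.
have [d [d01 ->]] := tnorm_weighted_sum m.
apply: ler_sum_nat => n nm.
by have /andP[_ dn1] := d01 n nm; rewrite ler_piMl.
Qed.

Lemma partial_sum_norm_nondecreasing :
  nondecreasing_seq (fun N => \sum_(1 <= n < N) `|x n|).
Proof.
apply/nondecreasing_seqP => -[|n]; first by rewrite !big_geq.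
by rewrite [leRHS]big_nat_recr //= lerDl.
Qed.

Lemma is_cvgn_tnorm : inX x -> cvgn (tnorm x).
Proof.
move=> hx; apply: nondecreasing_is_cvgn; first exact: tnorm_nondecreasing.
exists (limn (fun N => \sum_(1 <= n < N) `|x n|)) => _ [N _ <-].
apply: le_trans (tnorm_le_sum_norm N) _.
exact: nondecreasing_cvgn_le partial_sum_norm_nondecreasing hx N.+1.
Qed.

Section Tail.
Variables (c : R) (k : nat).
Hypotheses (ck : c <= tnorm x k) (small_tail : forall {n}, (k < n)%N -> `|x n| / n%:R < c).

Lemma tnorm_addn j : tnorm x (k + j) =
  tnorm x k + \sum_(k.+1 <= n < (k + j).+1) ((1 - w n) * `|x n|).
Proof.
elim: j => [|j IH]; first by rewrite addn0 big_geq // addr0.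
have kj1 : (k < (k + j).+1)%N by rewrite ltnS leq_addr.
have le_max_r : `|x (k + j).+1| / (k + j).+1%:R <= tnorm x (k + j).
  apply: ltW (lt_le_trans (small_tail kj1) _).
  by apply: le_trans ck _; apply: tnorm_nondecreasing; rewrite leq_addr.
rewrite addnS tnormE //= big_nat_recr //= max_r // IH; ring.
Qed.

Lemma Xnorm_tail : inX x ->
  Xnorm x = tnorm x k + \big[+%R/0%R]_(k.+1 <= n <oo) ((1 - w n) * `|x n|).
Proof.
move=> hx.
have tail_cvg : (fun j => tnorm x (j + k) - tnorm x k) @ \oo --> Xnorm x - tnorm x k.
  by apply: cvgB; [rewrite (cvg_shiftn k); exact: is_cvgn_tnorm | exact: cvg_cst].
have : (fun N => \sum_(k.+1 <= n < N) ((1 - w n) * `|x n|)) @ \oo --> Xnorm x - tnorm x k.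
  rewrite -(cvg_shiftn k.+1); apply: cvg_trans tail_cvg.
  apply: near_eq_cvg; apply: nearW => j /=.
  by rewrite addnS addnC tnorm_addn addrAC subrr add0r.
by move/cvg_lim => ->; rewrite // addrC subrK.
Qed.

End Tail.

Lemma tnorm_gt0 n : (1 <= n)%N -> x n != 0 -> 0 < tnorm x n.
Proof.
move=> n1 xn0; rewrite tnormE //.
have w1 := w_lt1 n1; have w0 := w_gt0 n; have t0 := tnorm_ge0 n.-1.
have : 0 < `|x n| by rewrite normr_gt0.
have : 0 <= Num.max (`|x n| / n%:R) (tnorm x n.-1) by rewrite le_max t0 orbT.
nra.
Qed.

Lemma Xnorm_tail_exists : inX x -> (exists2 n, (1 <= n)%N & x n != 0) ->
  exists2 k, (1 <= k)%N &
    Xnorm x = tnorm x k + \big[+%R/0%R]_(k.+1 <= n <oo) ((1 - w n) * `|x n|).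
Proof.
move=> hx [n0 n01 xn0].
have norm_cvg0 : `|x n| @[n --> \oo] --> 0.
  by apply: cvg_series_cvg_0; rewrite -(is_cvg_series_restrict 1).
have [K _ small] := cvgr0_norm_lt _ norm_cvg0 _ (tnorm_gt0 _ n01 xn0).
exists (maxn K n0); first by rewrite (leq_trans n01) ?leq_maxr.
apply: (Xnorm_tail (tnorm x n0)) hx; first by apply: tnorm_nondecreasing; rewrite leq_maxr.
move=> n Kn; have n1 : (1 <= n)%N by rewrite (leq_ltn_trans _ Kn).
apply: le_lt_trans (small n _); last by rewrite /= (leq_trans _ (ltnW Kn)) ?leq_maxl.
by rewrite normr_id ler_pdivrMr ?ler_peMr ?ler1n ?ltr0n.
Qed.

End TruncatedNorm.

Theorem proposition1p5 (R : realType) (X : nat -> completeNormedModType R) :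
  (* (i) *)
  (forall (m : nat) (x : forall n, X n),
     (1 <= m)%N ->
     0 < \sum_(1 <= n < m.+1) `|x n| ->
     exists d : nat -> R,
       (forall n, (1 <= n <= m)%N -> 0 < d n <= 1) /\
       tnorm x m = \sum_(1 <= n < m.+1) d n * `|x n|) /\
  (* (ii) *)
  (forall (x : forall n, X n) (c : R) (k : nat),
     inX x -> 0 < c -> c <= tnorm x k ->
     (forall n, (k < n)%N -> `|x n| / n%:R < c) ->
     Xnorm x = tnorm x k +
       \big[+%R/0%R]_(k.+1 <= n <oo) ((1 - (n.+1%:R)^-1) * `|x n|)) /\
  (* (iii) *)
  (forall x : forall n, X n,
     inX x -> (exists n, (1 <= n)%N /\ x n <> 0) ->
     exists k : nat, (1 <= k)%N /\
       Xnorm x = tnorm x k +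
         \big[+%R/0%R]_(k.+1 <= n <oo) ((1 - (n.+1%:R)^-1) * `|x n|)).
Proof.
split; first by move=> m x _ _; exact: tnorm_weighted_sum.
split; first by move=> x c k hx _ ck small; exact: Xnorm_tail ck small hx.
move=> x hx [n [n1 /eqP xn0]].
by have [k k1 ->] := Xnorm_tail_exists x hx (ex_intro2 _ _ n n1 xn0); exists k.
Qed.
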